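(* Let $a,b,c,d,P_{\max}>0$, and assume both frontier curves are convex, i.e. $Q_1\le0$ and $Q_2\le0$. Define the points $A=(0,\log_2(1+cP_{\max}))$ and $C=(\log_2(1+aP_{\max}),0)$, and let $\gamma=\log_2(1+cP_{\max})/\log_2(1+aP_{\max})$. Then operating via TDM is optimal, i.e. the convex hull of the power-control rate region equals the triangle with vertices $(0,0),A,C$, if $$\frac{(1+cP_{\max})(1+dP_{\max})}{1+cP_{\max}+dP_{\max}}\ \ge\ \left(\frac{1+aP_{\max}+bP_{\max}}{1+bP_{\max}}\right)^{\gamma}.$$ This inequality is equivalent to the point $B=(R_1(P_{\max},P_{\max}),R_2(P_{\max},P_{\max}))$ lying on or below the segment joining $A$ and $C$.
   Context: The channel power gains are normalized by the noise variance: $a$ (direct gain of user 1), $b$ (interference gain from transmitter 2 at receiver 1), $c$ (direct gain of user 2), $d$ (interference gain from transmitter 1 at receiver 2). The rates are $R_1(P_1,P_2)=\log_2\!\left(1+\frac{aP_1}{1+bP_2}\right)$ and $R_2(P_1,P_2)=\log_2\!\left(1+\frac{cP_2}{1+dP_1}\right)$, with $P_1,P_2\in[0,P_{\max}]$. The power-control rate region is $\{(r_1,r_2)\in\mathbb R^2_{\ge0}: \exists (P_1,P_2)\in[0,P_{\max}]^2,\ r_1\le R_1(P_1,P_2),\ r_2\le R_2(P_1,P_2)\}$. TDM (time division multiplexing) means time-sharing between $A$ (only user 2 transmits, at full power) and $C$ (only user 1 transmits, at full power). The thresholds are defined with $\alpha=d(1+bP_{\max})$ and $\beta=b(1+dP_{\max})$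 as $$Q_1=\frac{\Re\sqrt{(a-\alpha)(a-\alpha+acP_{\max})}-\alpha}{ad},\qquad Q_2=\frac{\Re\sqrt{(c-\beta)(c-\beta+acP_{\max})}-\beta}{cb}.$$ $Q_1\le 0$ means that the curve $\{(R_1(P_1,P_{\max}),R_2(P_1,P_{\max})):P_1\in[0,P_{\max}]\}$ is convex, viewed as the graph of $r_2$ as a function of $r_1$. $Q_2\le0$ means that the curve $\{(R_1(P_{\max},P_2),R_2(P_{\max},P_2)):P_2\in[0,P_{\max}]\}$ is convex. *)

From Stdlib Require Import Reals List.
Open Scope R_scope.

Definition log2 (x : R) : R := ln x / ln 2.

(* Real part of the principal complex square root of a real number:
   sqrt x if x >= 0, and 0 if x < 0 (sqrt of a negative is purely imaginary). *)
Definition re_sqrt (x : R) : R := if Rle_dec 0 x then sqrt x else 0.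

Definition rate1 (a b P1 P2 : R) : R := log2 (1 + a * P1 / (1 + b * P2)).
Definition rate2 (c d P1 P2 : R) : R := log2 (1 + c * P2 / (1 + d * P1)).

Definition Q1 (a b c d Pmax : R) : R :=
  let alpha := d * (1 + b * Pmax) in
  (re_sqrt ((a - alpha) * (a - alpha + a * c * Pmax)) - alpha) / (a * d).

Definition Q2 (a b c d Pmax : R) : R :=
  let beta := b * (1 + d * Pmax) in
  (re_sqrt ((c - beta) * (c - beta + a * c * Pmax)) - beta) / (c * b).

Definition rate_region (a b c d Pmax : R) (r : R * R) : Prop :=
  0 <= fst r /\ 0 <= snd r /\
  exists P1 P2, 0 <= P1 <= Pmax /\ 0 <= P2 <= Pmax /\
    fst r <= rate1 a b P1 P2 /\ snd r <= rate2 c d P1 P2.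

Definition conv_comb (l : list (R * (R * R))) : R * R :=
  (fold_right (fun wp acc => fst wp * fst (snd wp) + acc) 0 l,
   fold_right (fun wp acc => fst wp * snd (snd wp) + acc) 0 l).

Definition conv_hull (S : R * R -> Prop) (x : R * R) : Prop :=
  exists l : list (R * (R * R)),
    Forall (fun wp => 0 <= fst wp /\ S (snd wp)) l /\
    fold_right (fun wp acc => fst wp + acc) 0 l = 1 /\
    conv_comb l = x.

Definition tri_region (p q s : R * R) (x : R * R) : Prop :=
  exists l0 l1 l2, 0 <= l0 /\ 0 <= l1 /\ 0 <= l2 /\ l0 + l1 + l2 = 1 /\
    x = (l0 * fst p + l1 * fst q + l2 * fst s, l0 * snd p + l1 * snd q + l2 * snd s).

(* Write RC = log2 (1 + a Pmax), RA = log2 (1 + c Pmax) for the single-user rates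
   and call a rate pair (r1, r2) "below the TDM line" when r1 / RC + r2 / RA <= 1.
   The proof has three independent parts.

   1. Analytic core.  For weights l, m >= 0 the weighted rate
        W (P1, P2) = l * R1 (P1, P2) + m * R2 (P1, P2)
      restricted to the frontier P2 = Pmax has derivative in P1 equal to a positive
      factor times l - m * (const) * g (P1) with g nonincreasing, as soon as a certain
      quadratic polynomial is nonnegative on [1, oo).  Hence W is quasi-convex along
      the frontier and attains its maximum at an end point.  The hypothesis Q1 <= 0
      guarantees the nonnegativity of that polynomial (Q2 <= 0 does the symmetric
      job).  Scaling (P1, P2) up to the frontier increases both rates, so W is
      maximal at one of (0, Pmax), (Pmax, Pmax), (Pmax, 0).  With l = 1/RC, m = 1/RA
      the outer corners give 1 and the middle one is the point B, so the whole rate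
      region lies below the TDM line when B does.
   2. Algebra.  Taking logarithms, the condition of the theorem says B is below the
      segment AC.
   3. Geometry.  A set of nonnegative points below the TDM line that contains
      (0,0), A and C has the triangle (0,0) A C as convex hull. *)

From Stdlib Require Import Reals List Lra Psatz.
From Coquelicot Require Import Coquelicot.
Open Scope R_scope.

Lemma ln_gt_0 (x : R) : 1 < x -> 0 < ln x.
Proof. intros Hx. rewrite <- ln_1. apply ln_increasing; lra. Qed.

Lemma log2_le (x y : R) : 0 < x -> x <= y -> log2 x <= log2 y.
Proof.
intros Hx Hxy. unfold log2, Rdiv. apply Rmult_le_compat_r.
- apply Rlt_le, Rinv_0_lt_compat, ln_gt_0; lra.
- now apply ln_le.
Qed.

Lemma log2_gt_0 (x : R) : 1 < x -> 0 < log2 x.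
Proof. intros Hx. apply Rdiv_lt_0_compat; apply ln_gt_0; lra. Qed.

Lemma log2_1 : log2 1 = 0.
Proof. unfold log2. rewrite ln_1. field. apply Rgt_not_eq, ln_gt_0; lra. Qed.

Lemma ln_eq_log2 (x : R) : ln x = ln 2 * log2 x.
Proof. unfold log2. field. apply Rgt_not_eq, ln_gt_0; lra. Qed.

Lemma div_le_div_cross (x y z w : R) :
  0 < y -> 0 < w -> x * w <= z * y -> x / y <= z / w.
Proof.
intros Hy Hw H. apply (Rmult_le_reg_r (y * w)); [nra|].
replace (x / y * (y * w)) with (x * w) by (field; lra).
replace (z / w * (y * w)) with (z * y) by (field; lra). exact H.
Qed.

Lemma Rpower_le_iff (x e y : R) :
  0 < x -> 0 < y -> (Rpower x e <= y <-> e * ln x <= ln y).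
Proof.
intros Hx Hy. rewrite <- (ln_Rpower x e).
assert (Hp : 0 < Rpower x e) by apply exp_pos.
split; intros H.
- now apply ln_le.
- destruct (Rle_lt_dec (Rpower x e) y) as [Hle|Hlt]; [exact Hle|].
  apply ln_increasing in Hlt; lra.
Qed.

Lemma rate1_nonneg (a b P1 P2 : R) :
  0 <= a -> 0 <= b -> 0 <= P1 -> 0 <= P2 -> 0 <= rate1 a b P1 P2.
Proof.
intros Ha Hb HP1 HP2. rewrite <- log2_1. unfold rate1. apply log2_le; [lra|].
assert (0 <= a * P1 / (1 + b * P2)) by (apply Rdiv_le_0_compat; nra). lra.
Qed.

Lemma rate1_silent (a b P2 : R) : 0 <= b -> 0 <= P2 -> rate1 a b 0 P2 = 0.
Proof.
intros Hb HP2. unfold rate1. rewrite <- log2_1 at 2. f_equal. field. nra.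
Qed.

Lemma rate1_alone (a b P1 : R) : rate1 a b P1 0 = log2 (1 + a * P1).
Proof. unfold rate1. f_equal. field. Qed.

Lemma rate2_as_rate1 (c d P1 P2 : R) : rate2 c d P1 P2 = rate1 c d P2 P1.
Proof. reflexivity. Qed.

Lemma nondecreasing_of_derive (f df : R -> R) (lo hi : R) :
  (forall x, lo <= x <= hi -> is_derive f x (df x)) ->
  (forall x, lo <= x <= hi -> 0 <= df x) ->
  forall x y, lo <= x -> x <= y -> y <= hi -> f x <= f y.
Proof.
intros Hd Hp x y Hx Hxy Hy.
destruct (Req_dec x y) as [<-|Hne]; [lra|].
destruct (MVT_gen f x y df) as [z [Hz Heq]];
  rewrite ?Rmin_left, ?Rmax_right in * by lra.
- intros z Hz. apply Hd. lra.
- intros z Hz. apply continuity_pt_filterlim.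
  apply (ex_derive_continuous (K := R_AbsRing) (V := R_NormedModule)).
  eexists. apply Hd. lra.
- assert (0 <= df z) by (apply Hp; lra). nra.
Qed.

Lemma nonincreasing_of_derive (f df : R -> R) (lo hi : R) :
  (forall x, lo <= x <= hi -> is_derive f x (df x)) ->
  (forall x, lo <= x <= hi -> df x <= 0) ->
  forall x y, lo <= x -> x <= y -> y <= hi -> f y <= f x.
Proof.
intros Hd Hn x y Hx Hxy Hy.
enough (- f x <= - f y) by lra.
apply (nondecreasing_of_derive (fun z => - f z) (fun z => - df z) lo hi); auto.
- intros z Hz. apply is_derive_Reals, derivable_pt_lim_opp, is_derive_Reals. now apply Hd.
- intros z Hz. specialize (Hn z Hz). lra.
Qed.

(* If the derivative of [f] is a positive multiple of a nondecreasing function [K],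
   then [f] first decreases and then increases: it is bounded by its end values. *)
Lemma le_Rmax_ends_of_derive (f df h K : R -> R) (lo hi : R) :
  (forall x, lo <= x <= hi -> is_derive f x (df x)) ->
  (forall x, lo <= x <= hi -> 0 < h x /\ df x = h x * K x) ->
  (forall x y, lo <= x -> x <= y -> y <= hi -> K x <= K y) ->
  forall t, lo <= t <= hi -> f t <= Rmax (f lo) (f hi).
Proof.
intros Hd Hfac HK t Ht.
destruct (Rle_lt_dec (K t) 0) as [Hneg|Hpos].
- apply Rle_trans with (f lo); [|apply Rmax_l].
  apply (nonincreasing_of_derive f df lo t); try lra.
  + intros x Hx. apply Hd. lra.
  + intros x Hx. destruct (Hfac x ltac:(lra)) as [Hh ->].
    assert (K x <= K t) by (apply HK; lra). nra.
- apply Rle_trans with (f hi); [|apply Rmax_r].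
  apply (nondecreasing_of_derive f df t hi); try lra.
  + intros x Hx. apply Hd. lra.
  + intros x Hx. destruct (Hfac x ltac:(lra)) as [Hh ->].
    assert (K t <= K x) by (apply HK; lra). nra.
Qed.

(* With alpha = d (1 + b Pmax), this is (up to a positive factor and the
   substitution u = 1 + d P1) minus the numerator of the derivative of the ratio
   g in [frontier_ratio_nonincreasing]. *)
Definition frontier_poly (a b c d P u : R) : R :=
  let alpha := d * (1 + b * P) in
  a * u * u + 2 * (alpha - a) * u + (alpha - a) * c * P.

(* [Q1 <= 0] means that the larger real root of [frontier_poly] (if any) is at
   most 1: indeed a * poly u = (a u - a + alpha)^2 - disc, and Q1 <= 0 says
   sqrt disc <= alpha. *)
Lemma Q1_nonpos_frontier_poly (a b c d P : R) :
  0 < a -> 0 < b -> 0 < c -> 0 < d -> 0 < P ->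
  Q1 a b c d P <= 0 -> forall u, 1 <= u -> 0 <= frontier_poly a b c d P u.
Proof.
intros Ha Hb Hc Hd HP HQ u Hu. unfold Q1, re_sqrt in HQ. unfold frontier_poly.
set (alpha := d * (1 + b * P)) in *.
set (disc := (a - alpha) * (a - alpha + a * c * P)) in *.
assert (Hsq : a * (a * u * u + 2 * (alpha - a) * u + (alpha - a) * c * P)
              = (a * u - a + alpha) ^ 2 - disc) by (unfold disc; ring).
apply (Rmult_le_reg_l a); [lra|]. rewrite Rmult_0_r, Hsq.
destruct (Rle_dec 0 disc) as [Hdisc|Hdisc].
- assert (Hs2 : sqrt disc * sqrt disc = disc) by (apply sqrt_sqrt; lra).
  assert (Hs0 := sqrt_pos disc).
  assert (Hsa : sqrt disc <= alpha).
  { destruct (Rle_lt_dec (sqrt disc) alpha) as [Hle|Hlt]; [exact Hle|].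
    assert (0 < (sqrt disc - alpha) / (a * d)) by (apply Rdiv_lt_0_compat; nra). lra. }
  rewrite <- Hs2.
  replace ((a * u - a + alpha) ^ 2 - sqrt disc * sqrt disc)
    with ((a * u - a + alpha - sqrt disc) * (a * u - a + alpha + sqrt disc)) by ring.
  apply Rmult_le_pos; nra.
- assert (0 <= (a * u - a + alpha) ^ 2) by apply pow2_ge_0. lra.
Qed.

Lemma Q2_as_Q1 (a b c d P : R) : Q2 a b c d P = Q1 c d a b P.
Proof. unfold Q1, Q2. now rewrite (Rmult_comm a c). Qed.

Definition weighted_rate (l m a b c d P1 P2 : R) : R :=
  l * rate1 a b P1 P2 + m * rate2 c d P1 P2.

Lemma weighted_rate_swap (l m a b c d P1 P2 : R) :
  weighted_rate l m a b c d P1 P2 = weighted_rate m l c d a b P2 P1.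
Proof. unfold weighted_rate, rate1, rate2. ring. Qed.

Section Frontier.

Variables a b c d P : R.
Hypotheses (Ha : 0 < a) (Hb : 0 < b) (Hc : 0 < c) (Hd : 0 < d) (HP : 0 < P).

(* The ratio whose monotonicity drives the sign of the derivative along the
   frontier; it is nonincreasing exactly because [frontier_poly] is nonnegative. *)
Lemma frontier_ratio_nonincreasing :
  (forall u, 1 <= u -> 0 <= frontier_poly a b c d P u) ->
  let g t := (1 + b * P + a * t) / ((1 + d * t) * (1 + d * t + c * P)) in
  forall x y, 0 <= x -> x <= y -> y <= P -> g y <= g x.
Proof.
intros Hpoly g.
set (D t := (1 + d * t) * (1 + d * t + c * P)).
apply (nonincreasing_of_derive g
  (fun t => - frontier_poly a b c d P (1 + d * t) / (D t * D t)) 0 P).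
- intros t Ht. assert (0 < D t) by (unfold D; apply Rmult_lt_0_compat; nra).
  unfold g, frontier_poly. auto_derive.
  + unfold D in *. lra.
  + unfold D in *. field. split; nra.
- intros t Ht. assert (0 < D t) by (unfold D; apply Rmult_lt_0_compat; nra).
  assert (0 <= frontier_poly a b c d P (1 + d * t)) by (apply Hpoly; nra).
  apply Rmult_le_0_r; [lra|]. apply Rlt_le, Rinv_0_lt_compat. nra.
Qed.

Lemma frontier_weighted_rate_le_ends (l m : R) :
  0 <= l -> 0 <= m ->
  (forall u, 1 <= u -> 0 <= frontier_poly a b c d P u) ->
  forall t, 0 <= t <= P ->
  weighted_rate l m a b c d t P
    <= Rmax (weighted_rate l m a b c d 0 P) (weighted_rate l m a b c d P P).
Proof.
intros Hl Hm Hpoly.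
assert (Hl2 : 0 < ln 2) by (apply ln_gt_0; lra).
set (N t := 1 + b * P + a * t).
set (g t := N t / ((1 + d * t) * (1 + d * t + c * P))).
apply (le_Rmax_ends_of_derive (fun t => weighted_rate l m a b c d t P)
  (fun t => (l * a / N t - m * d * c * P / ((1 + d * t) * (1 + d * t + c * P))) / ln 2)
  (fun t => a / (N t * ln 2)) (fun t => l - m * (d * c * P / a) * g t)).
- intros t Ht. unfold weighted_rate, rate1, rate2, log2, N. auto_derive.
  + assert (0 <= a * t / (1 + b * P)) by (apply Rdiv_le_0_compat; nra).
    assert (0 <= c * P / (1 + d * t)) by (apply Rdiv_le_0_compat; nra).
    repeat split; nra.
  + field. repeat split; nra.
- intros t Ht. split.
  + unfold N. apply Rdiv_lt_0_compat; [lra|]. apply Rmult_lt_0_compat; nra.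
  + unfold g, N. field. repeat split; nra.
- intros x y Hx Hxy Hy.
  assert (Hg : g y <= g x) by exact (frontier_ratio_nonincreasing Hpoly x y Hx Hxy Hy).
  assert (0 <= m * (d * c * P / a)).
  { apply Rmult_le_pos; [lra|]. apply Rlt_le, Rdiv_lt_0_compat; [|lra].
    repeat apply Rmult_lt_0_compat; lra. }
  nra.
Qed.

(* Scaling a power pair with P1 <= P2 up to the frontier increases both rates. *)
Lemma rates_dominated_by_frontier (P1 P2 : R) :
  0 <= P1 -> P1 <= P2 -> P2 <= P ->
  exists t, 0 <= t <= P /\
    rate1 a b P1 P2 <= rate1 a b t P /\ rate2 c d P1 P2 <= rate2 c d t P.
Proof.
intros HP1 H12 HP2.
destruct (Req_dec P2 0) as [H0|H0].
- exists 0. assert (P1 = 0) by lra. subst. split; [lra|].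
  rewrite !rate2_as_rate1, !rate1_silent, rate1_alone by lra.
  split; [lra|]. rewrite <- log2_1. apply log2_le; nra.
- exists (P1 * P / P2).
  assert (Ht0 : 0 <= P1 * P / P2) by (apply Rdiv_le_0_compat; nra).
  assert (HtP : P1 * P / P2 <= P).
  { apply (Rmult_le_reg_r P2); [lra|]. field_simplify; nra. }
  split; [lra|]. unfold rate1, rate2. split; apply log2_le.
  + assert (0 <= a * P1 / (1 + b * P2)) by (apply Rdiv_le_0_compat; nra). lra.
  + apply Rplus_le_compat_l, div_le_div_cross; try nra.
    replace (a * (P1 * P / P2) * (1 + b * P2)) with (a * P1 * (P * (1 + b * P2) / P2))
      by (field; lra).
    apply Rmult_le_compat_l; [nra|].
    apply (Rmult_le_reg_r P2); [lra|]. field_simplify; nra.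
  + assert (0 <= c * P2 / (1 + d * P1)) by (apply Rdiv_le_0_compat; nra). lra.
  + apply Rplus_le_compat_l, div_le_div_cross; try nra.
    replace (c * P * (1 + d * P1)) with (c * (P + d * P1 * P)) by ring.
    replace (c * P2 * (1 + d * (P1 * P / P2))) with (c * (P2 + d * P1 * P)) by (field; lra).
    nra.
Qed.

Lemma weighted_rate_le_ends (l m P1 P2 : R) :
  0 <= l -> 0 <= m ->
  (forall u, 1 <= u -> 0 <= frontier_poly a b c d P u) ->
  0 <= P1 -> P1 <= P2 -> P2 <= P ->
  weighted_rate l m a b c d P1 P2
    <= Rmax (weighted_rate l m a b c d 0 P) (weighted_rate l m a b c d P P).
Proof.
intros Hl Hm Hpoly HP1 H12 HP2.
destruct (rates_dominated_by_frontier P1 P2 HP1 H12 HP2) as [t [Ht [H1 H2]]].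
apply Rle_trans with (weighted_rate l m a b c d t P).
- unfold weighted_rate. nra.
- now apply frontier_weighted_rate_le_ends.
Qed.

End Frontier.

Definition below_tdm (RA RC : R) (r : R * R) : Prop := fst r / RC + snd r / RA <= 1.

Lemma below_tdm_iff_segment (RA RC : R) (r : R * R) :
  0 < RA -> 0 < RC -> below_tdm RA RC r <-> snd r <= RA * (1 - fst r / RC).
Proof.
intros HRA HRC. unfold below_tdm.
replace (RA * (1 - fst r / RC)) with (RA * (1 - fst r / RC - snd r / RA) + snd r)
  by (field; lra).
split; intros H.
- assert (0 <= RA * (1 - fst r / RC - snd r / RA)) by (apply Rmult_le_pos; lra). lra.
- assert (0 <= 1 - fst r / RC - snd r / RA); [|lra].
  apply (Rmult_le_reg_l RA); lra.
Qed.

Lemma below_tdm_le (RA RC r1 r2 s1 s2 : R) :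
  0 < RA -> 0 < RC -> r1 <= s1 -> r2 <= s2 ->
  below_tdm RA RC (s1, s2) -> below_tdm RA RC (r1, r2).
Proof.
intros HRA HRC H1 H2. unfold below_tdm. simpl. unfold Rdiv.
assert (r1 * / RC <= s1 * / RC) by (apply Rmult_le_compat_r; [apply Rlt_le, Rinv_0_lt_compat|]; lra).
assert (r2 * / RA <= s2 * / RA) by (apply Rmult_le_compat_r; [apply Rlt_le, Rinv_0_lt_compat|]; lra).
lra.
Qed.

Lemma rates_below_tdm (a b c d P : R) :
  0 < a -> 0 < b -> 0 < c -> 0 < d -> 0 < P ->
  Q1 a b c d P <= 0 -> Q2 a b c d P <= 0 ->
  let RA := log2 (1 + c * P) in
  let RC := log2 (1 + a * P) in
  below_tdm RA RC (rate1 a b P P, rate2 c d P P) ->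
  forall P1 P2, 0 <= P1 <= P -> 0 <= P2 <= P ->
  below_tdm RA RC (rate1 a b P1 P2, rate2 c d P1 P2).
Proof.
intros Ha Hb Hc Hd HP HQ1 HQ2 RA RC HB P1 P2 HP1 HP2. unfold below_tdm in *. simpl in *.
assert (HRA : 0 < RA) by (apply log2_gt_0; nra).
assert (HRC : 0 < RC) by (apply log2_gt_0; nra).
assert (Hl : 0 <= / RC) by (apply Rlt_le, Rinv_0_lt_compat; lra).
assert (Hm : 0 <= / RA) by (apply Rlt_le, Rinv_0_lt_compat; lra).
assert (Hpoly1 := Q1_nonpos_frontier_poly a b c d P Ha Hb Hc Hd HP HQ1).
rewrite Q2_as_Q1 in HQ2.
assert (Hpoly2 := Q1_nonpos_frontier_poly c d a b P Hc Hd Ha Hb HP HQ2).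
assert (HBw : weighted_rate (/ RC) (/ RA) a b c d P P <= 1).
{ unfold weighted_rate. lra. }
assert (HcornerA : weighted_rate (/ RC) (/ RA) a b c d 0 P = 1).
{ unfold weighted_rate. rewrite rate1_silent, rate2_as_rate1, rate1_alone by lra.
  fold RA. field. lra. }
assert (HcornerC : weighted_rate (/ RA) (/ RC) c d a b 0 P = 1).
{ unfold weighted_rate. rewrite rate1_silent, rate2_as_rate1, rate1_alone by lra.
  fold RC. field. lra. }
replace (rate1 a b P1 P2 / RC + rate2 c d P1 P2 / RA)
  with (weighted_rate (/ RC) (/ RA) a b c d P1 P2) by (unfold weighted_rate; field; lra).
destruct (Rle_dec P1 P2) as [H12|H21].
- eapply Rle_trans; [apply weighted_rate_le_ends; auto; lra|].
  rewrite HcornerA. apply Rmax_lub; lra.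
- rewrite weighted_rate_swap.
  eapply Rle_trans; [apply weighted_rate_le_ends; auto; lra|].
  rewrite HcornerC, <- weighted_rate_swap. apply Rmax_lub; lra.
Qed.

Lemma tdm_condition_iff (a b c d P : R) :
  0 < a -> 0 < b -> 0 < c -> 0 < d -> 0 < P ->
  let RA := log2 (1 + c * P) in
  let RC := log2 (1 + a * P) in
  Rpower ((1 + a * P + b * P) / (1 + b * P)) (RA / RC)
    <= (1 + c * P) * (1 + d * P) / (1 + c * P + d * P)
  <-> rate2 c d P P <= RA * (1 - rate1 a b P P / RC).
Proof.
intros Ha Hb Hc Hd HP RA RC.
assert (Hl2 : 0 < ln 2) by (apply ln_gt_0; lra).
assert (HRC : 0 < RC) by (apply log2_gt_0; nra).
assert (HX : (1 + a * P + b * P) / (1 + b * P) = 1 + a * P / (1 + b * P)) by (field; nra).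
assert (HY : (1 + c * P) * (1 + d * P) / (1 + c * P + d * P)
             = (1 + c * P) / (1 + c * P / (1 + d * P))) by (field; nra).
assert (HposX : 0 < 1 + a * P / (1 + b * P)).
{ assert (0 <= a * P / (1 + b * P)) by (apply Rdiv_le_0_compat; nra). lra. }
assert (HposB2 : 0 < 1 + c * P / (1 + d * P)).
{ assert (0 <= c * P / (1 + d * P)) by (apply Rdiv_le_0_compat; nra). lra. }
assert (HposA : 0 < 1 + c * P) by nra.
assert (HposY : 0 < (1 + c * P) / (1 + c * P / (1 + d * P)))
  by (apply Rdiv_lt_0_compat; assumption).
rewrite HX, HY, (Rpower_le_iff _ _ _ HposX HposY), (ln_div _ _ HposA HposB2).
rewrite (ln_eq_log2 (1 + a * P / (1 + b * P))), (ln_eq_log2 (1 + c * P)),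
  (ln_eq_log2 (1 + c * P / (1 + d * P))).
fold RA (rate1 a b P P) (rate2 c d P P).
replace (RA / RC * (ln 2 * rate1 a b P P)) with (ln 2 * (RA / RC * rate1 a b P P))
  by ring.
replace (ln 2 * RA - ln 2 * rate2 c d P P) with (ln 2 * (RA - rate2 c d P P)) by ring.
replace (RA * (1 - rate1 a b P P / RC)) with (RA - RA / RC * rate1 a b P P)
  by (field; lra).
split; intros H.
- apply Rmult_le_reg_l in H; lra.
- apply Rmult_le_compat_l; lra.
Qed.

Lemma conv_comb_linear_le (S : R * R -> Prop) (u v w : R) :
  (forall p, S p -> u * fst p + v * snd p <= w) ->
  forall l, List.Forall (fun wp => 0 <= fst wp /\ S (snd wp)) l ->
  u * fst (conv_comb l) + v * snd (conv_comb l)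
    <= fold_right (fun wp acc => fst wp + acc) 0 l * w.
Proof.
intros HS l Hl. induction Hl as [|[wt p] l Hwp Hl IH]; simpl in *; [lra|].
destruct Hwp as [Hw Hp].
assert (wt * (u * fst p + v * snd p) <= wt * w) by (apply Rmult_le_compat_l; auto).
nra.
Qed.

Lemma conv_hull_triangle (S : R * R -> Prop) (RA RC : R) :
  0 < RA -> 0 < RC ->
  (forall p, S p -> 0 <= fst p /\ 0 <= snd p /\ below_tdm RA RC p) ->
  S (0, 0) -> S (0, RA) -> S (RC, 0) ->
  forall x, conv_hull S x <-> tri_region (0, 0) (0, RA) (RC, 0) x.
Proof.
intros HRA HRC HS HO HA HC x. split.
- intros [l [Hl [Hw <-]]].
  assert (Hx1 := conv_comb_linear_le S (-1) 0 0 ltac:(intros p Hp; apply HS in Hp; lra) l Hl).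
  assert (Hx2 := conv_comb_linear_le S 0 (-1) 0 ltac:(intros p Hp; apply HS in Hp; lra) l Hl).
  assert (Hline := conv_comb_linear_le S (/ RC) (/ RA) 1
    ltac:(intros p Hp; apply HS in Hp; unfold below_tdm in Hp; lra) l Hl).
  rewrite Hw in Hx1, Hx2, Hline.
  destruct (conv_comb l) as [x1 x2]. simpl in *.
  exists (1 - x2 / RA - x1 / RC), (x2 / RA), (x1 / RC).
  assert (0 <= x2 / RA) by (apply Rdiv_le_0_compat; lra).
  assert (0 <= x1 / RC) by (apply Rdiv_le_0_compat; lra).
  unfold Rdiv in *. repeat split; try lra.
  simpl. f_equal; field; lra.
- intros [l0 [l1 [l2 [H0 [H1 [H2 [Hs ->]]]]]]].
  exists ((l0, (0, 0)) :: (l1, (0, RA)) :: (l2, (RC, 0)) :: nil).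
  repeat split.
  + repeat (apply List.Forall_cons; [split; assumption|]). apply List.Forall_nil.
  + simpl. lra.
  + unfold conv_comb. simpl. f_equal; ring.
Qed.

Theorem lemma2 (a b c d Pmax : R) :
  0 < a -> 0 < b -> 0 < c -> 0 < d -> 0 < Pmax ->
  Q1 a b c d Pmax <= 0 -> Q2 a b c d Pmax <= 0 ->
  let RA := log2 (1 + c * Pmax) in
  let RC := log2 (1 + a * Pmax) in
  let A := (0, RA) in
  let C := (RC, 0) in
  let gamma := RA / RC in
  let B := (rate1 a b Pmax Pmax, rate2 c d Pmax Pmax) in
  let cond :=
    Rpower ((1 + a * Pmax + b * Pmax) / (1 + b * Pmax)) gamma
      <= (1 + c * Pmax) * (1 + d * Pmax) / (1 + c * Pmax + d * Pmax) in
  (* the condition is equivalent to B lying on or below the segment AC *)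
  (cond <-> snd B <= RA * (1 - fst B / RC)) /\
  (* under the condition, TDM is optimal *)
  (cond -> forall x : R * R,
     conv_hull (rate_region a b c d Pmax) x <-> tri_region (0, 0) A C x).
Proof.
intros Ha Hb Hc Hd HP HQ1 HQ2 RA RC A C gamma B cond.
assert (Hcond := tdm_condition_iff a b c d Pmax Ha Hb Hc Hd HP).
assert (HRA : 0 < RA) by (apply log2_gt_0; nra).
assert (HRC : 0 < RC) by (apply log2_gt_0; nra).
split; [exact Hcond|].
intros HBseg. apply Hcond in HBseg.
assert (HB : below_tdm RA RC B) by (apply below_tdm_iff_segment; assumption).
apply conv_hull_triangle; [exact HRA | exact HRC | | | |].
- intros [r1 r2] (Hr1 & Hr2 & P1 & P2 & HP1 & HP2 & Hle1 & Hle2). simpl in *.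
  repeat split; [exact Hr1 | exact Hr2 |].
  apply (below_tdm_le RA RC r1 r2 (rate1 a b P1 P2) (rate2 c d P1 P2)); try assumption.
  exact (rates_below_tdm a b c d Pmax Ha Hb Hc Hd HP HQ1 HQ2 HB P1 P2 HP1 HP2).
- repeat split; simpl; try lra. exists 0, 0.
  repeat split; try lra; apply rate1_nonneg; lra.
- repeat split; simpl; try lra. exists 0, Pmax.
  repeat split; try lra.
  + apply rate1_nonneg; lra.
  + rewrite rate2_as_rate1, rate1_alone. apply Req_le. reflexivity.
- repeat split; simpl; try lra. exists Pmax, 0.
  repeat split; try lra.
  + rewrite rate1_alone. apply Req_le. reflexivity.
  + apply rate1_nonneg; lra.
Qed.
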